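(* The Hopf algebras $\mathsf{cf}(\mathrm{UT}_\bullet)$ and $\mathsf{scf}(\mathrm{UT}_\bullet)$ are noncommutative and noncocommutative.
   Context: Fix the finite field $\mathbb{F}_q$; $[n]=\{1,\dots,n\}$. $\mathrm{UT}_n$ is the group of $n\times n$ unipotent upper triangular matrices over $\mathbb{F}_q$; $\mathsf{cf}$ denotes complex class functions. Hopf algebra $\mathsf{cf}(\mathrm{UT}_\bullet)=\bigoplus_n\mathsf{cf}(\mathrm{UT}_n)$: for $I\subseteq[n]$, $I^c=[n]\setminus I$, let $\mathrm{UL}_I=\{g\in\mathrm{UT}_n:(g-1_n)_{i,j}\ne0\text{ only if }(i,j)\in I\times I\cup I^c\times I^c\}$, $\mathrm{UR}_I=\{g:(g-1_n)_{i,j}\ne0\text{ only if }(i,j)\in I\times I^c\}$, $\mathrm{UP}_I=\{g:(g-1_n)_{i,j}=0\text{ for }(i,j)\in I^c\times I\}=\mathrm{UL}_I\ltimes\mathrm{UR}_I$ ($\mathrm{UP}_{[i]}=\mathrm{UT}_n$). With $\mathrm{cano}_I:I\to[|I|]$ order-preserving, $\mathrm{UL}_I\cong\mathrm{UT}_{|I|}\times\mathrm{UT}_{|I^c|}$ by relabelling the diagonal blocks, inducing $\mathrm{st}_{(I,I^c)}:\mathsf{cf}(\mathrm{UL}_I)\to\mathsf{cf}(\mathrm{UT}_{|I|})\otimes\mathsf{cf}(\mathrm{UT}_{|I^c|})$. Product $\mu=\bigoplus_{n\ge i\ge0}\mathrm{Inf}^{\mathrm{UT}_n}_{\mathrm{UL}_{[i]}}\circ\mathrm{st}^{-1}_{([i],[i]^c)}$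 with $\mathrm{Inf}\psi(lr)=\psi(l)$; coproduct $\Delta=\bigoplus_n\sum_{I\subseteq[n]}\mathrm{st}_{(I,I^c)}\circ\mathrm{Def}^{\mathrm{UP}_I}_{\mathrm{UL}_I}\circ\mathrm{Res}^{\mathrm{UT}_n}_{\mathrm{UP}_I}$ with $\mathrm{Def}\psi(g)=\frac1{|\mathrm{UR}_I|}\sum_{x\in\mathrm{UR}_I}\psi(gx)$. A natural unit interval order of $[n]$ is a partial order $\pi\subseteq[n]\times[n]$ with $(i,j)\in\pi\Rightarrow i\le j$ such that for every $(j,k)\in\pi$ with $j\ne k$, all $(i,l)$ with $i\le j$, $k\le l$ lie in $\pi$. For such $\pi$, $\mathrm{UT}(\pi)=\{g\in\mathrm{UT}_n:(g-1_n)_{i,j}\ne0\text{ only if }(i,j)\in\pi\}$, and $\mathsf{scf}(\mathrm{UT}_n)$ is the span of the characters $\mathrm{Ind}^{\mathrm{UT}_n}_{\mathrm{UT}(\pi)}(\mathbb{1})$ over all natural unit interval orders $\pi$ of $[n]$; $\mathsf{scf}(\mathrm{UT}_\bullet)=\bigoplus_n\mathsf{scf}(\mathrm{UT}_n)$ is a sub-Hopf algebra of $\mathsf{cf}(\mathrm{UT}_\bullet)$. *)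

From mathcomp Require Import all_boot all_order all_algebra all_field.
Set Implicit Arguments. Unset Strict Implicit. Unset Printing Implicit Defensive.
Import GRing.Theory.

(* A class function on UT_n is modelled as a function 'M[F]_n -> algC that
   vanishes outside UT_n and is invariant under UT_n-conjugation. *)

Section Defs.
Variable F : finFieldType.
Local Open Scope ring_scope.

Definition UT (n : nat) : {set 'M[F]_n} :=
  [set A : 'M[F]_n | [forall i : 'I_n, forall j : 'I_n,
     ((j < i)%N ==> (A i j == 0)) && ((i == j) ==> (A i j == 1))]].

Definition is_cf (n : nat) (f : 'M[F]_n -> algC) : Prop :=
  (forall A, A \notin UT n -> f A = 0) /\
  (forall g h, g \in UT n -> h \in UT n -> f (invmx g *m h *m g) = f h).

(* entry (i,j) of a matrix, addressed by natural numbers (0 if out of range) *)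
Definition mxn (m : nat) (A : 'M[F]_m) (i j : nat) : F :=
  match (insub i : option 'I_m), (insub j : option 'I_m) with
  | Some i', Some j' => A i' j'
  | _, _ => 0
  end.

(* product component cf(UT_a) (x) cf(UT_b) -> cf(UT_n), n = a + b:
   Inf^{UT_n}_{UL_[a]} o st^{-1}, i.e. f(top-left a-block) * g(bottom-right b-block) *)
Definition mu (n a b : nat) (f : 'M[F]_a -> algC) (g : 'M[F]_b -> algC)
    (A : 'M[F]_n) : algC :=
  if A \in UT n then
    f (\matrix_(i < a, j < a) mxn A i j) *
    g (\matrix_(i < b, j < b) mxn A (a + i) (a + j))
  else 0.

(* cano_I(i) : position of i inside I (0-based) *)
Definition rk (n : nat) (I : {set 'I_n}) (i : 'I_n) : nat :=
  #|[set k in I | (k < i)%N]|.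

(* the element of UL_I corresponding under st to (u, v) *)
Definition embL (n a b : nat) (I : {set 'I_n}) (u : 'M[F]_a) (v : 'M[F]_b)
    : 'M[F]_n :=
  \matrix_(i, j)
    if (i \in I) && (j \in I) then mxn u (rk I i) (rk I j)
    else if (i \notin I) && (j \notin I) then mxn v (rk (~: I) i) (rk (~: I) j)
    else 0.

Definition UR (n : nat) (I : {set 'I_n}) : {set 'M[F]_n} :=
  [set x in UT n | [forall i : 'I_n, forall j : 'I_n,
     ((x - 1%:M) i j != 0) ==> ((i \in I) && (j \notin I))]].

(* the (a,b)-component (a + b = n) of the coproduct, as a function on
   UT_a x UT_b (identifying cf(UT_a) (x) cf(UT_b) with cf(UT_a x UT_b)):
   sum_{|I| = a} st_(I,I^c) o Def^{UP_I}_{UL_I} o Res^{UT_n}_{UP_I} *)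
Definition Delta (n a b : nat) (chi : 'M[F]_n -> algC)
    (u : 'M[F]_a) (v : 'M[F]_b) : algC :=
  \sum_(I : {set 'I_n} | #|I| == a)
     (#|UR I|%:R)^-1 * \sum_(x in UR I) chi (embL I u v *m x).

Definition nuio (n : nat) (P : {set 'I_n * 'I_n}) : bool :=
  [&& [forall i : 'I_n, (i, i) \in P],
      [forall i : 'I_n, forall j : 'I_n, ((i, j) \in P) && ((j, i) \in P) ==> (i == j)],
      [forall i : 'I_n, forall j : 'I_n, forall k : 'I_n,
         ((i, j) \in P) && ((j, k) \in P) ==> ((i, k) \in P)],
      [forall i : 'I_n, forall j : 'I_n, ((i, j) \in P) ==> (i <= j)%N] &
      [forall j : 'I_n, forall k : 'I_n, ((j, k) \in P) && (j != k) ==>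
         [forall i : 'I_n, forall l : 'I_n, (i <= j)%N && (k <= l)%N ==> ((i, l) \in P)]]].

Definition UTpi (n : nat) (P : {set 'I_n * 'I_n}) : {set 'M[F]_n} :=
  [set A in UT n | [forall i : 'I_n, forall j : 'I_n, ((A - 1%:M) i j != 0) ==> ((i, j) \in P)]].

Definition IndOne (n : nat) (H : {set 'M[F]_n}) (g : 'M[F]_n) : algC :=
  if g \in UT n then
    (#|H|%:R)^-1 * \sum_(x in UT n) ((invmx x *m g *m x) \in H)%:R
  else 0.

Definition is_scf (n : nat) (f : 'M[F]_n -> algC) : Prop :=
  exists c : {set 'I_n * 'I_n} -> algC,
    forall A, f A = \sum_(P : {set 'I_n * 'I_n} | nuio P) c P * IndOne (UTpi P) A.

End Defs.

From mathcomp Require Import all_boot all_order all_algebra all_field.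
Set Implicit Arguments. Unset Strict Implicit. Unset Printing Implicit Defensive.
Import GRing.Theory Num.Theory.
Local Open Scope ring_scope.

(* If [r] is a strict relation on [[n]] closed under moving up and to the
   right, the pattern group UT(r) is normal in UT_n, so its indicator is a
   class function and a multiple of Ind_{UT(r)}^{UT_n} 1, hence lies in scf.
   Indices are counted from 0.
   Product: let delta_m be the indicator of the trivial subgroup of UT_m and
   A = 1 + E_01 in UT_3; delta_1 * delta_2 sees the trivial top-left 1-block
   and bottom-right 2-block of A, while delta_2 * delta_1 sees the top-left
   2-block 1 + E_01, so they differ at A.
   Coproduct: let rho = {(0,2), (0,3), (1,3)}, rho' = {(0,3), (1,3)} and
   chi = 1_UT(rho) - 1_UT(rho') on UT_4, which is nonnegative and vanishes
   unless the (0,2) entry is nonzero.  Let u = 1 in UT_1, v = 1 + E_12 in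
   UT_3.  Every summand of Delta chi (u, v) vanishes, while all summands of
   Delta chi (v, u) are nonnegative and the one for I = {0,1,3} contains
   chi((1 + E_13)(1 + E_02)) = 1. *)

Section Unitriangular.
Variables (F : finFieldType) (n : nat).
Implicit Types (A B : 'M[F]_n).

Lemma UTP A :
  reflect ((forall i j : 'I_n, (j < i)%N -> A i j = 0) /\ (forall i, A i i = 1))
          (A \in UT F n).
Proof.
rewrite inE; apply: (iffP forallP) => [UTA | [A_low A_diag] i].
  split=> [i j ji | i].
    by have /forallP/(_ j)/andP[/implyP/(_ ji)/eqP] := UTA i.
  by have /forallP/(_ i)/andP[_ /implyP/(_ (eqxx i))/eqP] := UTA i.
apply/forallP=> j; apply/andP; split; apply/implyP.
  by move=> ji; rewrite A_low.
by move/eqP=> <-; rewrite A_diag.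
Qed.

Lemma UT_lower A (i j : 'I_n) : A \in UT F n -> (j < i)%N -> A i j = 0.
Proof. by case/UTP=> A_low _; apply: A_low. Qed.

Lemma UT_diag A (i : 'I_n) : A \in UT F n -> A i i = 1.
Proof. by case/UTP. Qed.

Lemma UT1 : 1%:M \in UT F n.
Proof.
apply/UTP; split=> [i j ji | i]; rewrite mxE ?eqxx //.
by rewrite -val_eqE /= (gtn_eqF ji).
Qed.

Lemma UT_mul A B : A \in UT F n -> B \in UT F n -> A *m B \in UT F n.
Proof.
move=> UTA UTB; apply/UTP; split=> [i j ji | i]; rewrite mxE.
  apply: big1 => k _; have [ki | ik] := ltnP k i; first by rewrite (UT_lower UTA ki) mul0r.
  by rewrite (UT_lower UTB (leq_trans ji ik)) mulr0.
rewrite (bigD1 i) //= !UT_diag // mulr1 big1 ?addr0 // => k /negPf nki.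
have [ki | ik] := ltnP k i; first by rewrite (UT_lower UTA ki) mul0r.
rewrite (UT_lower UTB) ?mulr0 // ltn_neqAle ik andbT.
by apply: contraFN nki => /eqP/val_inj ->.
Qed.

Lemma UT_unit A : A \in UT F n -> A \in unitmx.
Proof.
move=> UTA; rewrite -unitmx_tr unitmxE det_trig.
  by rewrite big1 ?unitr1 // => i _; rewrite mxE UT_diag.
by apply/is_trig_mxP=> i j ij; rewrite mxE UT_lower.
Qed.

(* Right multiplication by [A] maps the finite set [UT F n] injectively into
   itself, hence onto it; the preimage of [1] is [invmx A]. *)
Lemma UT_inv A : A \in UT F n -> invmx A \in UT F n.
Proof.
move=> UTA; have uA := UT_unit UTA.
have mulA_inj : {in UT F n &, injective (mulmx^~ A)}.
  by move=> B C _ _ /(congr1 (mulmx^~ (invmx A))); rewrite !mulmxK.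
have mulA_UT : (mulmx^~ A) @: UT F n = UT F n.
  apply/eqP; rewrite eqEcard (card_in_imset mulA_inj) leqnn andbT.
  by apply/subsetP=> _ /imsetP[B UTB ->]; apply: UT_mul.
have /imsetP[B UTB /(congr1 (mulmx^~ (invmx A)))] : 1%:M \in (mulmx^~ A) @: UT F n.
  by rewrite mulA_UT UT1.
by rewrite /= mul1mx mulmxK // => ->.
Qed.

End Unitriangular.

Section Indicators.
Variables (F : finFieldType) (n : nat).

Definition indicator (H : {set 'M[F]_n}) (A : 'M[F]_n) : algC := (A \in H)%:R.

Lemma is_cfB (f g : 'M[F]_n -> algC) :
  is_cf f -> is_cf g -> is_cf (fun A => f A - g A).
Proof.
move=> [f0 f_conj] [g0 g_conj]; split=> [A nUTA | x A UTx UTA].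
  by rewrite f0 ?g0 ?subrr.
by rewrite f_conj ?g_conj.
Qed.

Lemma is_scfB (f g : 'M[F]_n -> algC) :
  is_scf f -> is_scf g -> is_scf (fun A => f A - g A).
Proof.
move=> [c fE] [d gE]; exists (fun P => c P - d P) => A.
by rewrite fE gE -sumrB; apply: eq_bigr => P _; rewrite mulrBl.
Qed.

Variable H : {set 'M[F]_n}.
Hypothesis sH_UT : H \subset UT F n.
Hypothesis H_conj : forall x g, x \in UT F n -> g \in UT F n ->
  (invmx x *m g *m x \in H) = (g \in H).

Lemma is_cf_indicator : is_cf (indicator H).
Proof.
split=> [A nUTA | x g UTx UTg]; last by rewrite /indicator H_conj.
by apply/eqP; rewrite pnatr_eq0 eqb0; apply: contra nUTA; apply/subsetP.
Qed.

Lemma IndOne_normal g :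
  IndOne H g = #|UT F n|%:R / #|H|%:R * indicator H g.
Proof.
rewrite /IndOne /indicator; case: ifPn => [UTg | nUTg].
  rewrite (eq_bigr (fun=> (g \in H)%:R)) => [|x UTx]; last by rewrite H_conj.
  by rewrite sumr_const -[(g \in H)%:R *+ _]mulr_natl mulrCA mulrA.
by rewrite (contraNF (subsetP sH_UT g)) ?mulr0.
Qed.

End Indicators.

Section Patterns.
Variables (F : finFieldType) (n : nat) (r : rel 'I_n).
Implicit Types (A X g x : 'M[F]_n).

Definition pattern : {set 'I_n * 'I_n} := [set p | (p.1 == p.2) || r p.1 p.2].

Definition supported X := forall i j, X i j != 0 -> r i j.

Lemma UTpi_patternP A :
  reflect (A \in UT F n /\ supported (A - 1%:M)) (A \in UTpi F pattern).
Proof.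
rewrite [A \in UTpi _ _]inE; apply: (iffP andP) => -[UTA suppA]; split=> //.
  move=> i j Aij; move/forallP/(_ i)/forallP/(_ j)/implyP/(_ Aij): suppA.
  rewrite inE /=; case: eqVneq => //= eq_ij; move: Aij.
  by rewrite eq_ij !mxE eqxx UT_diag // subrr eqxx.
by apply/forallP=> i; apply/forallP=> j; apply/implyP=> /suppA rij; rewrite inE rij orbT.
Qed.

Lemma UTpi_pattern_UT A : A \in UTpi F pattern -> A \in UT F n.
Proof. by case/UTpi_patternP. Qed.

Lemma UTpi_pattern1 : 1%:M \in UTpi F pattern.
Proof. by apply/UTpi_patternP; split=> [|i j]; rewrite ?UT1 // subrr mxE eqxx. Qed.

Lemma notin_UTpi_pattern A i j :
  (A - 1%:M) i j != 0 -> ~~ r i j -> A \notin UTpi F pattern.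
Proof. by move=> Aij nrij; apply/UTpi_patternP=> -[_ /(_ i j Aij)]; apply/negP. Qed.

Hypothesis r_up : forall i j i' j' : 'I_n,
  r i j -> (i' <= i)%N -> (j <= j')%N -> r i' j'.
Hypothesis r_strict : forall i j : 'I_n, r i j -> (i < j)%N.

Lemma supported_mull A X : A \in UT F n -> supported X -> supported (A *m X).
Proof.
move=> UTA suppX i j; apply: contraR => nrij; rewrite mxE big1 // => k _.
have [ki | ik] := ltnP k i; first by rewrite (UT_lower UTA ki) mul0r.
have [-> | /suppX rkj] := eqVneq (X k j) 0; first by rewrite mulr0.
by case/negP: nrij; apply: r_up rkj _ _.
Qed.

Lemma supported_mulr A X : A \in UT F n -> supported X -> supported (X *m A).
Proof.
move=> UTA suppX i j; apply: contraR => nrij; rewrite mxE big1 // => k _.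
have [jk | kj] := ltnP j k; first by rewrite (UT_lower UTA jk) mulr0.
have [-> | /suppX rik] := eqVneq (X i k) 0; first by rewrite mul0r.
by case/negP: nrij; apply: r_up rik _ _.
Qed.

Lemma supported_conj x X :
  x \in UT F n -> supported X -> supported (invmx x *m X *m x).
Proof. by move=> UTx suppX; apply/supported_mulr/supported_mull/suppX/UT_inv. Qed.

Lemma UTpi_pattern_conj x g : x \in UT F n -> g \in UT F n ->
  (invmx x *m g *m x \in UTpi F pattern) = (g \in UTpi F pattern).
Proof.
move=> UTx UTg; have ux := UT_unit UTx.
have conj1B y h : y \in unitmx -> invmx y *m h *m y - 1%:M = invmx y *m (h - 1%:M) *m y.
  by move=> uy; rewrite mulmxBr mulmxBl mulmx1 mulVmx.
apply/UTpi_patternP/UTpi_patternP=> -[UTh supph]; split=> //.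
- have -> : g = invmx (invmx x) *m (invmx x *m g *m x) *m invmx x.
    by rewrite invmxK !mulmxA mulmxV // mul1mx mulmxK.
  by rewrite conj1B ?unitmx_inv //; apply: supported_conj; rewrite ?UT_inv.
- by rewrite !UT_mul ?UT_inv.
- by rewrite conj1B //; apply: supported_conj.
Qed.

Lemma nuio_pattern : nuio pattern.
Proof.
apply/and5P; split.
- by apply/forallP=> i; rewrite inE eqxx.
- apply/forallP=> i; apply/forallP=> j; apply/implyP; rewrite !inE /=.
  case/andP=> /orP[// | /r_strict ij] /orP[/eqP -> // | /r_strict ji].
  by have := ltn_trans ij ji; rewrite ltnn.
- apply/forallP=> i; apply/forallP=> j; apply/forallP=> k; apply/implyP; rewrite !inE /=.
  case/andP=> /orP[/eqP -> // | rij] /orP[/eqP <- | /r_strict/ltnW jk]; first by rewrite rij orbT.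
  by rewrite (r_up rij) ?orbT.
- apply/forallP=> i; apply/forallP=> j; apply/implyP; rewrite inE /=.
  by case/orP=> [/eqP -> // | /r_strict/ltnW].
- apply/forallP=> j; apply/forallP=> k; apply/implyP; rewrite inE /=.
  case/andP=> /orP[/eqP -> | rjk _]; first by rewrite eqxx.
  apply/forallP=> i; apply/forallP=> l; apply/implyP=> /andP[ij kl].
  by rewrite inE (r_up rjk) ?orbT.
Qed.

Let H := UTpi F pattern.

Lemma sub_UTpi_pattern_UT : H \subset UT F n.
Proof. by apply/subsetP=> A /UTpi_pattern_UT. Qed.

Lemma is_cf_pattern : is_cf (indicator H).
Proof. exact/is_cf_indicator/UTpi_pattern_conj/sub_UTpi_pattern_UT. Qed.

Lemma is_scf_pattern : is_scf (indicator H).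
Proof.
have cardH_neq0 : #|H|%:R != 0 :> algC.
  by rewrite pnatr_eq0 -lt0n; apply/card_gt0P; exists 1%:M; apply: UTpi_pattern1.
have cardUT_neq0 : #|UT F n|%:R != 0 :> algC.
  by rewrite pnatr_eq0 -lt0n; apply/card_gt0P; exists 1%:M; apply: UT1.
exists (fun P => (P == pattern)%:R * (#|H|%:R / #|UT F n|%:R)) => A.
rewrite (bigD1 pattern) ?nuio_pattern //= big1 => [|P /andP[_ /negPf->]].
  rewrite eqxx mul1r addr0 (IndOne_normal sub_UTpi_pattern_UT).
    by rewrite !mulrA divfK // divff // mul1r.
  exact: UTpi_pattern_conj.
by rewrite !mul0r.
Qed.

End Patterns.

Section PatternComparison.
Variables (F : finFieldType) (n : nat).
Implicit Types (r s : rel 'I_n) (A : 'M[F]_n).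

Lemma UTpi_pattern_subrel r s A : subrel r s ->
  A \in UTpi F (pattern r) -> A \in UTpi F (pattern s).
Proof.
by move=> rs /UTpi_patternP[UTA suppA]; apply/UTpi_patternP; split=> // i j /suppA/rs.
Qed.

Lemma UTpi_pattern_eq r s A :
  (forall i j, (A - 1%:M) i j != 0 -> r i j = s i j) ->
  (A \in UTpi F (pattern r)) = (A \in UTpi F (pattern s)).
Proof.
move=> rs; apply/UTpi_patternP/UTpi_patternP=> -[UTA suppA]; split=> // i j Aij.
  by rewrite -rs ?suppA.
by rewrite rs ?suppA.
Qed.

End PatternComparison.

Section Coproduct.
Variables (F : finFieldType) (n a b : nat) (I : {set 'I_n}).
Variables (u : 'M[F]_a) (v : 'M[F]_b).

Lemma rk_sum (p : 'I_n) :
  rk I p = (\sum_(k < n) ((k \in I) && (k < p)))%N.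
Proof. by rewrite /rk -sum1_card big_mkcond /=; apply: eq_bigr => k _; rewrite inE. Qed.

Lemma embL_mulUR x p q : x \in UR F I -> (p \notin I) || (q \in I) ->
  (embL I u v *m x) p q = embL I u v p q.
Proof.
rewrite inE => /andP[_ /forallP URx] pq.
rewrite -[x](subrK 1%:M) mulmxDr mulmx1 mxE [X in X + _]mxE big1 ?add0r // => k _.
have [-> | xkq] := eqVneq ((x - 1%:M) k q) 0; first by rewrite mulr0.
move/forallP/(_ q)/implyP/(_ xkq)/andP: (URx k) => [kI /negPf qI].
by move: pq; rewrite qI orbF mxE kI => /negPf->; rewrite mul0r.
Qed.

End Coproduct.

Section UnitriangularMatrices.
Variable F : finFieldType.

Definition unitri m (S : seq (nat * nat)) : 'M[F]_m :=
  \matrix_(i, j) ((i == j :> nat) || ((i : nat, j : nat) \in S))%:R.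

Lemma mxn_unitri m S k l : mxn (unitri m S) k l =
  if (k < m)%N && (l < m)%N then ((k == l) || ((k, l) \in S))%:R else 0.
Proof.
rewrite /mxn; case: insubP => [i -> <- | /negPf->] //.
by case: insubP => [j -> <- | /negPf->]; rewrite ?mxE ?andbF.
Qed.

Lemma unitri_UT m S : all (fun p => p.1 < p.2)%N S -> unitri m S \in UT F m.
Proof.
move=> /allP S_up; apply/UTP; split=> [i j ji | i]; rewrite mxE ?eqxx //.
rewrite (gtn_eqF ji); case: (boolP (_ \in S)) => // /S_up /=.
by rewrite ltnNge ltnW.
Qed.

End UnitriangularMatrices.

Definition delta (F : finFieldType) m : 'M[F]_m -> algC :=
  indicator (UTpi F (pattern [rel _ _ : 'I_m | false])).
Arguments delta : clear implicits.

Section ProductWitness.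
Variable F : finFieldType.

Lemma is_cf_delta m : is_cf (delta F m).
Proof. exact: is_cf_pattern. Qed.

Lemma is_scf_delta m : is_scf (delta F m).
Proof. exact: is_scf_pattern. Qed.

Lemma mu_delta_12 : mu (delta F 1) (delta F 2) (unitri F 3 [:: (0, 1)]%N) = 1.
Proof.
rewrite /mu unitri_UT // /delta /indicator.
set M1 := \matrix_(i, j) _; set M2 := \matrix_(i, j) _.
have -> : M1 = 1%:M by apply/matrixP=> i j; rewrite !mxE mxn_unitri !ord1.
have -> : M2 = 1%:M.
  apply/matrixP=> i j; rewrite !mxE mxn_unitri !ltn_add2l !ltn_ord /= eqn_add2l.
  by case: i j => [[|[|//]] ?] [[|[|//]] ?].
by rewrite !UTpi_pattern1 mulr1.
Qed.

Lemma mu_delta_21 : mu (delta F 2) (delta F 1) (unitri F 3 [:: (0, 1)]%N) = 0.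
Proof.
rewrite /mu unitri_UT // /delta /indicator.
set M := \matrix_(i, j) _.
suff /negPf-> : M \notin UTpi F (pattern [rel _ _ : 'I_2 | false]) by rewrite mul0r.
apply: (@notin_UTpi_pattern _ _ _ _ ord0 (@Ordinal 2 1 isT)) => //.
by rewrite !mxE mxn_unitri /= subr0 oner_neq0.
Qed.

End ProductWitness.

Definition nat_rel m (S : seq (nat * nat)) : rel 'I_m :=
  fun i j => (i : nat, j : nat) \in S.

Section CoproductWitness.
Variable F : finFieldType.

Definition rho : rel 'I_4 := nat_rel [:: (0, 2); (0, 3); (1, 3)]%N.
Definition rho' : rel 'I_4 := nat_rel [:: (0, 3); (1, 3)]%N.

Lemma rho_up (i j i' j' : 'I_4) : rho i j -> (i' <= i)%N -> (j <= j')%N -> rho i' j'.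
Proof. by move: i j i' j'; do 4 case=> [[|[|[|[|?]]]] ?]. Qed.

Lemma rho_strict (i j : 'I_4) : rho i j -> (i < j)%N.
Proof. by move: i j; do 2 case=> [[|[|[|[|?]]]] ?]. Qed.

Lemma rho'_up (i j i' j' : 'I_4) : rho' i j -> (i' <= i)%N -> (j <= j')%N -> rho' i' j'.
Proof. by move: i j i' j'; do 4 case=> [[|[|[|[|?]]]] ?]. Qed.

Lemma rho'_strict (i j : 'I_4) : rho' i j -> (i < j)%N.
Proof. by move: i j; do 2 case=> [[|[|[|[|?]]]] ?]. Qed.

Lemma rho'_sub_rho : subrel rho' rho.
Proof. by move=> i j; rewrite /rho' /rho /nat_rel !inE => ->; rewrite !orbT. Qed.

Definition chi (A : 'M[F]_4) : algC :=
  indicator (UTpi F (pattern rho)) A - indicator (UTpi F (pattern rho')) A.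

Lemma is_scf_chi : is_scf chi.
Proof.
exact: is_scfB (is_scf_pattern F rho_up rho_strict) (is_scf_pattern F rho'_up rho'_strict).
Qed.

Lemma is_cf_chi : is_cf chi.
Proof. exact: is_cfB (is_cf_pattern F rho_up) (is_cf_pattern F rho'_up). Qed.

Lemma chi_ge0 A : 0 <= chi A.
Proof.
rewrite /chi /indicator; have [A_rho' | _] := boolP (A \in UTpi F (pattern rho')).
  by rewrite (UTpi_pattern_subrel rho'_sub_rho A_rho') subrr.
by rewrite subr0 ler0n.
Qed.

Lemma chi_eq0_outside A i j : (A - 1%:M) i j != 0 -> ~~ rho i j -> chi A = 0.
Proof.
move=> Aij nrho; have nrho' : ~~ rho' i j by apply: contra nrho; apply: rho'_sub_rho.
by rewrite /chi /indicator !(negPf (notin_UTpi_pattern Aij _)) ?subrr.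
Qed.

(* [rho] and [rho'] differ only at position (0, 2). *)
Lemma chi_eq0_02 A : (A - 1%:M) (@Ordinal 4 0 isT) (@Ordinal 4 2 isT) = 0 -> chi A = 0.
Proof.
move=> A02; rewrite /chi /indicator (@UTpi_pattern_eq _ _ rho rho') ?subrr // => i j Aij.
have [/andP[/eqP i0 /eqP j2] | not02] := boolP ((i == 0 :> nat) && (j == 2 :> nat)).
  have i_0 : i = @Ordinal 4 0 isT by apply: val_inj.
  have j_2 : j = @Ordinal 4 2 isT by apply: val_inj.
  by rewrite i_0 j_2 A02 eqxx in Aij.
by move: i j not02 {Aij}; do 2 case=> [[|[|[|[|?]]]] ?].
Qed.

Local Ltac eval_embL :=
  rewrite !mxE !inE /= ?rk_sum ?big_ord_recr ?big_ord0 /= ?inE /= ?mxn_unitri /=.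

Let u : 'M[F]_1 := unitri F 1 [::].
Let v : 'M[F]_3 := unitri F 3 [:: (1, 2)]%N.

(* For [I = [set i]], the entry (1, 2) of [v] lands outside [rho] unless
   [i = 2], and then the (0, 2) entry of [embL I u v] stays zero. *)
Lemma Delta_chi_u_v : Delta chi u v = 0.
Proof.
rewrite /Delta; apply: big1 => I /cards1P[i ->]; rewrite big1 ?mulr0 // => x URx.
case: i URx => -[|[|[|[|//]]]] i_lt URx.
- apply: (@chi_eq0_outside _ (@Ordinal 4 2 isT) (@Ordinal 4 3 isT)) => //.
  by rewrite mxE (embL_mulUR _ _ URx) ?inE //; eval_embL; rewrite subr0 oner_neq0.
- apply: (@chi_eq0_outside _ (@Ordinal 4 2 isT) (@Ordinal 4 3 isT)) => //.
  by rewrite mxE (embL_mulUR _ _ URx) ?inE //; eval_embL; rewrite subr0 oner_neq0.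
- by apply: chi_eq0_02; rewrite mxE (embL_mulUR _ _ URx) ?inE //; eval_embL; rewrite subr0.
- apply: (@chi_eq0_outside _ (@Ordinal 4 1 isT) (@Ordinal 4 2 isT)) => //.
  by rewrite mxE (embL_mulUR _ _ URx) ?inE //; eval_embL; rewrite subr0 oner_neq0.
Qed.

Let I0 : {set 'I_4} := [set~ @Ordinal 4 2 isT].
Let x0 : 'M[F]_4 := unitri F 4 [:: (0, 2)]%N.

Lemma x0_UR : x0 \in UR F I0.
Proof.
rewrite inE unitri_UT //=; apply/forallP=> i; apply/forallP=> j; apply/implyP.
by rewrite !mxE; move: i j; do 2 case=> [[|[|[|[|?]]]] ?] //=; rewrite ?subrr ?eqxx // !inE.
Qed.

Lemma embL_v_u_mul_x0 : embL I0 v u *m x0 = unitri F 4 [:: (1, 3); (0, 2)]%N.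
Proof.
apply/matrixP=> p q; rewrite !mxE !big_ord_recr big_ord0 /=.
move: p q; do 2 case=> [[|[|[|[|?]]]] ?] //; eval_embL.
all: by rewrite ?mul0r ?mulr0 ?mul1r ?mulr1 ?addr0 ?add0r.
Qed.

Lemma chi_embL_v_u_mul_x0 : chi (embL I0 v u *m x0) = 1.
Proof.
rewrite embL_v_u_mul_x0 /chi /indicator.
have /negPf-> : unitri F 4 [:: (1, 3); (0, 2)]%N \notin UTpi F (pattern rho').
  apply: (@notin_UTpi_pattern _ _ _ _ (@Ordinal 4 0 isT) (@Ordinal 4 2 isT)) => //.
  by rewrite !mxE /= subr0 oner_neq0.
suff -> : unitri F 4 [:: (1, 3); (0, 2)]%N \in UTpi F (pattern rho) by rewrite subr0.
apply/UTpi_patternP; split; first exact: unitri_UT.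
by move=> i j; rewrite !mxE; move: i j; do 2 case=> [[|[|[|[|?]]]] ?] //=; rewrite subrr eqxx.
Qed.

Lemma Delta_chi_v_u_gt0 : 0 < Delta chi v u.
Proof.
have term_ge0 I' : 0 <= #|UR F I'|%:R^-1 * \sum_(x in UR F I') chi (embL I' v u *m x).
  by rewrite mulr_ge0 ?invr_ge0 ?ler0n ?sumr_ge0 // => x _; apply: chi_ge0.
rewrite /Delta (bigD1 I0) /=; last by rewrite cardsC1 card_ord.
apply: ltr_pwDl; last by apply: sumr_ge0 => I' _; apply: term_ge0.
apply: mulr_gt0; first by rewrite invr_gt0 ltr0n; apply/card_gt0P; exists x0; apply: x0_UR.
rewrite (bigD1 x0) ?x0_UR //= chi_embL_v_u_mul_x0 ltr_pwDl ?ltr01 //.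
by apply: sumr_ge0 => x _; apply: chi_ge0.
Qed.

End CoproductWitness.

Theorem theorem7p7 (F : finFieldType) :
  (* cf(UT_.) is noncommutative *)
  (exists (n a b : nat) (f : 'M[F]_a -> algC) (g : 'M[F]_b -> algC) (A : 'M[F]_n),
      (a + b)%N = n /\ is_cf f /\ is_cf g /\ mu f g A <> mu g f A) /\
  (* cf(UT_.) is noncocommutative *)
  (exists (n a b : nat) (chi : 'M[F]_n -> algC) (u : 'M[F]_a) (v : 'M[F]_b),
      (a + b)%N = n /\ is_cf chi /\ Delta chi u v <> Delta chi v u) /\
  (* scf(UT_.) is noncommutative *)
  (exists (n a b : nat) (f : 'M[F]_a -> algC) (g : 'M[F]_b -> algC) (A : 'M[F]_n),
      (a + b)%N = n /\ is_scf f /\ is_scf g /\ mu f g A <> mu g f A) /\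
  (* scf(UT_.) is noncocommutative *)
  (exists (n a b : nat) (chi : 'M[F]_n -> algC) (u : 'M[F]_a) (v : 'M[F]_b),
      (a + b)%N = n /\ is_scf chi /\ Delta chi u v <> Delta chi v u).
Proof.
have mu_neq : mu (delta F 1) (delta F 2) (unitri F 3 [:: (0, 1)]%N)
           <> mu (delta F 2) (delta F 1) (unitri F 3 [:: (0, 1)]%N).
  by rewrite mu_delta_12 mu_delta_21; apply/eqP/oner_neq0.
have Delta_neq : Delta (@chi F) (unitri F 1 [::]) (unitri F 3 [:: (1, 2)]%N)
              <> Delta (@chi F) (unitri F 3 [:: (1, 2)]%N) (unitri F 1 [::]).
  by rewrite Delta_chi_u_v => /esym/eqP; apply/negP/lt0r_neq0/Delta_chi_v_u_gt0.
split; [|split; [|split]].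
- exists 3%N, 1%N, 2%N, (delta F 1), (delta F 2), (unitri F 3 [:: (0, 1)]%N).
  exact: conj erefl (conj (is_cf_delta F 1) (conj (is_cf_delta F 2) mu_neq)).
- exists 4%N, 1%N, 3%N, (@chi F), (unitri F 1 [::]), (unitri F 3 [:: (1, 2)]%N).
  exact: conj erefl (conj (is_cf_chi F) Delta_neq).
- exists 3%N, 1%N, 2%N, (delta F 1), (delta F 2), (unitri F 3 [:: (0, 1)]%N).
  exact: conj erefl (conj (is_scf_delta F 1) (conj (is_scf_delta F 2) mu_neq)).
- exists 4%N, 1%N, 3%N, (@chi F), (unitri F 1 [::]), (unitri F 3 [:: (1, 2)]%N).
  exact: conj erefl (conj (is_scf_chi F) Delta_neq).
Qed.
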